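(* Let $\sigma\in\{1,-1\}$, $n\ge 2$, $m_1,\dots,m_n>0$, $M=\sum_{j=1}^n m_j$, and let $q_k(t)=p(t+k)$, $k=1,\dots,n$, be an equally spaced choreographic solution, with $p$ of period $n$, of $$\ddot q_k=\sum_{j=1,\,j\neq k}^{n}\frac{m_j\big(q_j-\sigma(q_k\odot q_j)q_k\big)}{\big(\sigma-\sigma(q_k\odot q_j)^2\big)^{3/2}}-\sigma(\dot q_k\odot\dot q_k)q_k,\qquad k\in\{1,\dots,n\}.$$ Then for all $k\in\{1,\dots,n\}$ and all $t$, $$0=\sum_{j=1}^{n-1}\frac{\left(m_{j+k}-\frac Mn\right)\Big(p(t+j)-\sigma\big(p(t+j)\odot p(t)\big)p(t)\Big)}{\Big(\sigma-\sigma\big(p(t+j)\odot p(t)\big)^2\Big)^{3/2}}.$$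
   Context: $\mathbb{M}^2_\sigma=\{(x_1,x_2,x_3)\in\mathbb{R}^3: x_1^2+x_2^2+\sigma x_3^2=\sigma\}$ and $x\odot y=x_1y_1+x_2y_2+\sigma x_3y_3$; $p:\mathbb{R}\to\mathbb{M}^2_\sigma$ is twice continuously differentiable. Masses are indexed cyclically: $m_{k+Kn}=m_k$ for $k\in\{1,\dots,n\}$, $K\in\mathbb{Z}$. (Equal spacing has been normalized so that $h_{k+1}-h_k=1$ and the period of $p$ is $n$.) *)

From Stdlib Require Import Reals List Arith.
From Coquelicot Require Import Coquelicot.
Import ListNotations.
Open Scope R_scope.

Definition V3 : Type := (R * R * R)%type.
Definition c1 (x : V3) : R := fst (fst x).
Definition c2 (x : V3) : R := snd (fst x).
Definition c3 (x : V3) : R := snd x.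
Definition vmk (a b c : R) : V3 := (a, b, c).
Definition vzero : V3 := vmk 0 0 0.
Definition vadd (x y : V3) : V3 := vmk (c1 x + c1 y) (c2 x + c2 y) (c3 x + c3 y).
Definition vscale (a : R) (x : V3) : V3 := vmk (a * c1 x) (a * c2 x) (a * c3 x).
Definition vsub (x y : V3) : V3 := vadd x (vscale (-1) y).

Definition odot (sigma : R) (x y : V3) : R :=
  c1 x * c1 y + c2 x * c2 y + sigma * c3 x * c3 y.

Definition on_M2 (sigma : R) (x : V3) : Prop :=
  c1 x ^ 2 + c2 x ^ 2 + sigma * c3 x ^ 2 = sigma.

(* \sum_{j = lo}^{lo+cnt-1} f j, for vectors and reals *)
Definition vsum (f : nat -> V3) (lo cnt : nat) : V3 :=
  fold_right (fun j acc => vadd (f j) acc) vzero (seq lo cnt).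
Definition rsum (f : nat -> R) (lo cnt : nat) : R :=
  fold_right (fun j acc => f j + acc) 0 (seq lo cnt).

Definition C2_scalar (f : R -> R) : Prop :=
  (forall t, ex_derive f t) /\
  (forall t, ex_derive (Derive f) t) /\
  (forall t, continuous (Derive (Derive f)) t).
Definition C2_curve (p : R -> V3) : Prop :=
  C2_scalar (fun s => c1 (p s)) /\ C2_scalar (fun s => c2 (p s)) /\
  C2_scalar (fun s => c3 (p s)).

Definition vel (q : R -> V3) (t : R) : V3 :=
  vmk (Derive (fun s => c1 (q s)) t) (Derive (fun s => c2 (q s)) t)
      (Derive (fun s => c3 (q s)) t).
Definition acc (q : R -> V3) (t : R) : V3 :=
  vmk (Derive (Derive (fun s => c1 (q s))) t)
      (Derive (Derive (fun s => c2 (q s))) t)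
      (Derive (Derive (fun s => c3 (q s))) t).

(* the denominator  σ - σ (x ⊙ y)^2  (it is >= 0 on M^2_σ) *)
Definition den (sigma : R) (x y : V3) : R := sigma - sigma * (odot sigma x y) ^ 2.

Definition force (sigma : R) (x y : V3) : V3 :=
  vscale (/ (sqrt (den sigma x y)) ^ 3)
         (vsub y (vscale (sigma * odot sigma x y) x)).

Definition qk (p : R -> V3) (k : nat) : R -> V3 := fun t => p (t + INR k).

Definition is_solution (sigma : R) (n : nat) (m : nat -> R) (p : R -> V3) : Prop :=
  forall k, (1 <= k <= n)%nat -> forall t,
    acc (qk p k) t =
    vsub (vsum (fun j => if Nat.eqb j k then vzero
                         else vscale (m j) (force sigma (qk p k t) (qk p j t))) 1 n)
         (vscale (sigma * odot sigma (vel (qk p k) t) (vel (qk p k) t)) (qk p k t)).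

(** Evaluating the equation of body [k] at time [t - k] puts [p t] in the
    place of [q_k]: the left-hand side [p''(t) + σ (p'(t) ⊙ p'(t)) p(t)] no
    longer depends on [k], while by periodicity the right-hand side becomes
    [S k = Σ_{i=1}^{n-1} m_{i+k} F_i] with [F_i] the force exerted by [p(t+i)]
    on [p(t)].  So [S k] is the same for every [k]; averaging over [k], each
    [F_i] collects the total mass [M], hence [S k = (M/n) Σ_i F_i]. *)

From Stdlib Require Import Reals Lia.
From Coquelicot Require Import Coquelicot.
(* Last, so that [c1] is the coordinate of [V3] and not the [C1_fun] field of Reals. *)
Open Scope R_scope.

Section FiniteSums.

Implicit Types (a b : nat -> R) (lo cnt n k : nat).

Lemma rsum_ext a b lo cnt :
  (forall j, (lo <= j < lo + cnt)%nat -> a j = b j) -> rsum a lo cnt = rsum b lo cnt.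
Proof.
  revert lo; induction cnt as [|cnt IH]; intros lo Hab; [reflexivity|].
  change (a lo + rsum a (S lo) cnt = b lo + rsum b (S lo) cnt).
  rewrite Hab by lia; rewrite IH; [reflexivity|].
  intros; apply Hab; lia.
Qed.

Lemma rsum_plus a b lo cnt :
  rsum (fun j => a j + b j) lo cnt = rsum a lo cnt + rsum b lo cnt.
Proof.
  revert lo; induction cnt as [|cnt IH]; intros lo; cbn -[Rplus]; [ring|].
  unfold rsum in IH; rewrite IH; ring.
Qed.

Lemma rsum_scal_l c a lo cnt : rsum (fun j => c * a j) lo cnt = c * rsum a lo cnt.
Proof.
  revert lo; induction cnt as [|cnt IH]; intros lo; cbn -[Rplus Rmult]; [ring|].
  unfold rsum in IH; rewrite IH; ring.
Qed.

Lemma rsum_scal_r c a lo cnt : rsum (fun j => a j * c) lo cnt = rsum a lo cnt * c.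
Proof.
  rewrite Rmult_comm, <- rsum_scal_l; apply rsum_ext; intros; ring.
Qed.

Lemma rsum_const c lo cnt : rsum (fun _ => c) lo cnt = INR cnt * c.
Proof.
  revert lo; induction cnt as [|cnt IH]; intros lo; [unfold rsum; simpl; ring|].
  change (c + rsum (fun _ => c) (S lo) cnt = INR (S cnt) * c).
  rewrite IH, S_INR; ring.
Qed.

Lemma rsum_comm (g : nat -> nat -> R) lo1 cnt1 lo2 cnt2 :
  rsum (fun k => rsum (fun i => g k i) lo2 cnt2) lo1 cnt1
  = rsum (fun i => rsum (fun k => g k i) lo1 cnt1) lo2 cnt2.
Proof.
  revert lo1; induction cnt1 as [|cnt1 IH]; intros lo1.
  - cbn; rewrite rsum_const; ring.
  - change (rsum (fun i => g lo1 i) lo2 cnt2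
            + rsum (fun k => rsum (fun i => g k i) lo2 cnt2) (S lo1) cnt1
            = rsum (fun i => g lo1 i + rsum (fun k => g k i) (S lo1) cnt1) lo2 cnt2).
    rewrite IH, rsum_plus; reflexivity.
Qed.

Lemma rsum_shift a c lo cnt : rsum (fun j => a (j + c)%nat) lo cnt = rsum a (lo + c) cnt.
Proof.
  revert lo; induction cnt as [|cnt IH]; intros lo; [reflexivity|].
  change (a (lo + c)%nat + rsum (fun j => a (j + c)%nat) (S lo) cnt
          = a (lo + c)%nat + rsum a (S (lo + c)) cnt).
  rewrite IH; reflexivity.
Qed.

Lemma rsum_Sr a lo cnt : rsum a lo (S cnt) = rsum a lo cnt + a (lo + cnt)%nat.
Proof.
  revert lo; induction cnt as [|cnt IH]; intros lo.
  - cbn -[Rplus]; rewrite Nat.add_0_r; ring.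
  - change (a lo + rsum a (S lo) (S cnt) = a lo + rsum a (S lo) cnt + a (lo + S cnt)%nat).
    rewrite IH, Nat.add_succ_comm; ring.
Qed.

Lemma rsum_periodic a cnt lo c :
  (forall j, a (j + cnt)%nat = a j) -> rsum a (lo + c) cnt = rsum a lo cnt.
Proof.
  intros Ha; induction c as [|c IH]; [now rewrite Nat.add_0_r|].
  rewrite <- IH, Nat.add_succ_r; destruct cnt as [|cnt]; [reflexivity|].
  rewrite rsum_Sr.
  change (rsum a (S (lo + c)) cnt + a (S (lo + c) + cnt)%nat
          = a (lo + c)%nat + rsum a (S (lo + c)) cnt).
  rewrite Nat.add_succ_comm, Ha; ring.
Qed.

Lemma rsum_periodic_window a n i :
  (forall j, a (j + n)%nat = a j) -> rsum (fun j => a (j + i)%nat) 1 n = rsum a 1 n.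
Proof. intros Ha; rewrite rsum_shift; exact (rsum_periodic a n 1 i Ha). Qed.

Lemma rsum_skip a k lo cnt :
  (lo <= k < lo + cnt)%nat ->
  rsum (fun j => if Nat.eqb j k then 0 else a j) lo cnt = rsum a lo cnt - a k.
Proof.
  revert lo; induction cnt as [|cnt IH]; intros lo Hk; [lia|].
  change ((if Nat.eqb lo k then 0 else a lo)
          + rsum (fun j => if Nat.eqb j k then 0 else a j) (S lo) cnt
          = a lo + rsum a (S lo) cnt - a k).
  destruct (Nat.eqb_spec lo k) as [<-|Hlo].
  - rewrite (rsum_ext _ a) by (intros j Hj; destruct (Nat.eqb_spec j lo); [lia | reflexivity]).
    ring.
  - rewrite IH by lia; ring.
Qed.

Lemma rsum_skip_periodic a n k :
  (1 <= k <= n)%nat -> (forall j, a (j + n)%nat = a j) ->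
  rsum (fun j => if Nat.eqb j k then 0 else a j) 1 n
  = rsum (fun i => a (i + k)%nat) 1 (n - 1).
Proof.
  intros Hk Ha.
  rewrite rsum_skip by lia.
  rewrite <- (rsum_periodic a n 1 (k - 1) Ha), rsum_shift.
  replace (1 + (k - 1))%nat with k by lia.
  replace n with (S (n - 1)) at 1 by lia.
  change (a k + rsum a (S k) (n - 1) - a k = rsum a (S k) (n - 1)); ring.
Qed.

Lemma rsum_periodic_weights_mean w f n k lo cnt :
  (0 < n)%nat -> (forall i, w (i + n)%nat = w i) -> (1 <= k <= n)%nat ->
  (forall k', (1 <= k' <= n)%nat ->
     rsum (fun i => w (i + k')%nat * f i) lo cnt = rsum (fun i => w (i + k)%nat * f i) lo cnt) ->
  rsum (fun i => (w (i + k)%nat - rsum w 1 n / INR n) * f i) lo cnt = 0.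
Proof.
  intros Hn Hw Hk Hinv.
  set (S := rsum (fun i => w (i + k)%nat * f i) lo cnt).
  assert (Hmean : INR n * S = rsum w 1 n * rsum f lo cnt).
  { rewrite <- (rsum_const S 1), <- rsum_scal_l.
    rewrite (rsum_ext _ (fun k' => rsum (fun i => w (i + k')%nat * f i) lo cnt))
      by (intros; symmetry; apply Hinv; lia).
    rewrite rsum_comm; apply rsum_ext; intros i _.
    rewrite rsum_scal_r, <- (rsum_periodic_window w n i Hw).
    f_equal; apply rsum_ext; intros; rewrite Nat.add_comm; reflexivity. }
  assert (HnR : INR n <> 0) by (apply not_0_INR; lia).
  rewrite (rsum_ext _ (fun i => w (i + k)%nat * f i + (- (rsum w 1 n / INR n)) * f i))
    by (intros; ring).
  rewrite rsum_plus, rsum_scal_l; fold S.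
  apply (Rmult_eq_reg_l (INR n)); [|exact HnR].
  rewrite Rmult_plus_distr_l, Hmean; field; exact HnR.
Qed.

End FiniteSums.

Definition is_linear_form (phi : V3 -> R) : Prop :=
  (forall x y, phi (vadd x y) = phi x + phi y) /\ (forall a x, phi (vscale a x) = a * phi x).

Lemma linear_form_vzero phi : is_linear_form phi -> phi vzero = 0.
Proof.
  intros [_ Hscal].
  replace vzero with (vscale 0 vzero)
    by (unfold vscale, vzero, vmk, c1, c2, c3; cbn; rewrite Rmult_0_l; reflexivity).
  rewrite Hscal; ring.
Qed.

Lemma linear_form_vsub phi x y : is_linear_form phi -> phi (vsub x y) = phi x - phi y.
Proof. intros [Hadd Hscal]; unfold vsub; rewrite Hadd, Hscal; ring. Qed.

Lemma linear_form_vsum phi f lo cnt :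
  is_linear_form phi -> phi (vsum f lo cnt) = rsum (fun j => phi (f j)) lo cnt.
Proof.
  intros Hphi; revert lo; induction cnt as [|cnt IH]; intros lo.
  - exact (linear_form_vzero phi Hphi).
  - change (phi (vadd (f lo) (vsum f (S lo) cnt)) = phi (f lo) + rsum (fun j => phi (f j)) (S lo) cnt).
    rewrite (proj1 Hphi), IH; reflexivity.
Qed.

Lemma c1_linear : is_linear_form c1. Proof. split; reflexivity. Qed.
Lemma c2_linear : is_linear_form c2. Proof. split; reflexivity. Qed.
Lemma c3_linear : is_linear_form c3. Proof. split; reflexivity. Qed.

Lemma V3_components_eq (x y : V3) : c1 x = c1 y -> c2 x = c2 y -> c3 x = c3 y -> x = y.
Proof. destruct x as [[? ?] ?], y as [[? ?] ?]; cbn; intros -> -> ->; reflexivity. Qed.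

Lemma vel_shift p a t : vel (fun s => p (s + a)) t = vel p (t + a).
Proof.
  unfold vel; f_equal.
  - exact (Derive_n_comp_trans (fun s => c1 (p s)) 1 t a).
  - exact (Derive_n_comp_trans (fun s => c2 (p s)) 1 t a).
  - exact (Derive_n_comp_trans (fun s => c3 (p s)) 1 t a).
Qed.

Lemma acc_shift p a t : acc (fun s => p (s + a)) t = acc p (t + a).
Proof.
  unfold acc; f_equal.
  - exact (Derive_n_comp_trans (fun s => c1 (p s)) 2 t a).
  - exact (Derive_n_comp_trans (fun s => c2 (p s)) 2 t a).
  - exact (Derive_n_comp_trans (fun s => c3 (p s)) 2 t a).
Qed.

Lemma choreography_force_sum_invariant sigma n m p phi k t :
  is_solution sigma n m p -> (forall i, m (i + n)%nat = m i) ->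
  (forall s, p (s + INR n) = p s) -> is_linear_form phi -> (1 <= k <= n)%nat ->
  rsum (fun i => m (i + k)%nat * phi (force sigma (p t) (p (t + INR i)))) 1 (n - 1)
  = phi (acc p t) + sigma * odot sigma (vel p t) (vel p t) * phi (p t).
Proof.
  intros Hsol Hm Hp Hphi Hk.
  set (a := fun j => m j * phi (force sigma (p t) (p (t - INR k + INR j)))).
  assert (Ha : forall j, a (j + n)%nat = a j).
  { intros j; unfold a; rewrite Hm, plus_INR, <- Rplus_assoc, Hp; reflexivity. }
  pose proof (Hsol k Hk (t - INR k)) as E; unfold qk in E.
  rewrite acc_shift, vel_shift in E.
  replace (t - INR k + INR k) with t in E by ring.
  apply (f_equal phi) in E.
  rewrite linear_form_vsub, linear_form_vsum, (proj2 Hphi) in E by exact Hphi.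
  rewrite (rsum_ext _ (fun j => if Nat.eqb j k then 0 else a j)) in E.
  2:{ intros j _; destruct (Nat.eqb j k);
      [apply linear_form_vzero | apply (proj2 Hphi)]; exact Hphi. }
  rewrite rsum_skip_periodic in E by assumption.
  rewrite E, <- rsum_ext with (a := fun i => a (i + k)%nat); [ring|].
  intros i _; unfold a; rewrite plus_INR.
  replace (t - INR k + (INR i + INR k)) with (t + INR i) by ring; reflexivity.
Qed.

Theorem lemma3 (sigma : R) (n : nat) (m : nat -> R) (p : R -> V3) :
  (sigma = 1 \/ sigma = -1) ->
  (2 <= n)%nat ->
  (forall i, (1 <= i <= n)%nat -> 0 < m i) ->
  (* cyclic indexing of the masses: m_{k + K n} = m_k *)
  (forall i, m (i + n)%nat = m i) ->
  C2_curve p ->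
  (forall t, on_M2 sigma (p t)) ->
  (forall t, p (t + INR n) = p t) ->
  (* no collisions: the denominators of the equations are nonzero *)
  (forall t j k, (1 <= j <= n)%nat -> (1 <= k <= n)%nat -> j <> k ->
     den sigma (qk p k t) (qk p j t) <> 0) ->
  is_solution sigma n m p ->
  let M := rsum m 1 n in
  forall k, (1 <= k <= n)%nat -> forall t,
    vsum (fun j => vscale (m (j + k)%nat - M / INR n) (force sigma (p t) (p (t + INR j))))
         1 (n - 1) = vzero.
Proof.
  intros _ Hn _ Hm _ _ Hp _ Hsol M k Hk t.
  assert (Hcomp : forall phi, is_linear_form phi ->
    phi (vsum (fun j => vscale (m (j + k)%nat - M / INR n) (force sigma (p t) (p (t + INR j))))
              1 (n - 1)) = 0).
  { intros phi Hphi.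
    rewrite linear_form_vsum by exact Hphi.
    rewrite (rsum_ext _ (fun j => (m (j + k)%nat - M / INR n)
                                  * phi (force sigma (p t) (p (t + INR j)))))
      by (intros; apply (proj2 Hphi)).
    apply rsum_periodic_weights_mean; [lia | exact Hm | exact Hk |].
    intros k' Hk'.
    rewrite !(choreography_force_sum_invariant sigma n m p phi) by assumption.
    reflexivity. }
  apply V3_components_eq; apply Hcomp.
  - exact c1_linear.
  - exact c2_linear.
  - exact c3_linear.
Qed.
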